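(* Let $p$ be an odd prime, $\omega=e^{2\pi i/p}$, $m\ge1$, $Q=T_{(p^m)}$ and $K=K_Q(p)$. Let $M=S_\xi X^b$ and $M'=S_{\xi'}X^{b'}$ be elements of $K$ (with $S_\xi,S_{\xi'}\in Q$, $b,b'\in\mathbb{Z}_p$) such that $[M,M']=\omega^c\mathbbm{1}$ for some $c\in\mathbb{Z}_p$. Then: (1) if $b=b'=0$, then $c=0$; (2) if $b\neq0$, then $M'=S_{\chi'}M^{b'/b}$ where $\chi'(q)=\omega^{\alpha'_0+\alpha'_1q}$ for some $\alpha'_0,\alpha'_1\in\mathbb{Z}_p$, and $c=-b\alpha'_1$; (3) if $b'\neq0$, then $M=S_\chi M'^{\,b/b'}$ where $\chi(q)=\omega^{\alpha_0+\alpha_1q}$ for some $\alpha_0,\alpha_1\in\mathbb{Z}_p$, and $c=b'\alpha_1$.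
   Context: Let $\{|q\rangle:q\in\mathbb{Z}_p\}$ be the computational basis of $\mathbb{C}^p$ and $X|q\rangle=|q+1\rangle$. For $\xi:\mathbb{Z}_p\to U(1)$ let $S_\xi=\mathrm{diag}(\xi(0),\dots,\xi(p-1))$. $T=\{S_\xi:\prod_{q}\xi(q)=1\}$ and $T_{(p^k)}=\{S\in T:S^{p^k}=\mathbbm{1}\}$. $K_Q(p)$ is the subgroup of $SU(p)$ generated by all $S_\xi X^b$ with $S_\xi\in Q$, $b\in\mathbb{Z}_p$. The commutator is $[A,B]=ABA^{-1}B^{-1}$. For $b\neq 0$, $b'/b$ denotes $b'b^{-1}\in\mathbb{Z}_p$, used as an exponent via a representative in $\{0,\dots,p-1\}$. *)

From HB Require Import structures.
From mathcomp Require Import all_boot all_order all_algebra all_field.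
Set Implicit Arguments. Unset Strict Implicit. Unset Printing Implicit Defensive.
Import Order.TTheory GRing.Theory Num.Theory.
Local Open Scope ring_scope.

(* omega = e^{2 pi i / p} in algC.  p.-root (-1) is the p-th root of -1 with
   non-negative imaginary part and maximal real part, i.e. e^{i pi / p};
   its square is e^{2 pi i / p}. *)
Definition omega (p : nat) : algC := (p.-root (-1)) ^+ 2.

(* matrix power for arbitrary (not necessarily n.+1) size *)
Definition mxpow (n : nat) (A : 'M[algC]_n) (k : nat) : 'M[algC]_n :=
  iter k (mulmx A) 1%:M.

Definition Xshift (p : nat) : 'M[algC]_p :=
  \matrix_(i < p, j < p) (((i : nat) == (j.+1 %% p)%N)%:R : algC).

Definition Sdiag (p : nat) (xi : 'I_p -> algC) : 'M[algC]_p :=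
  diag_mx (\row_(q < p) xi q).

(* xi : Z_p -> U(1) with S_xi in T_(p^k): unit modulus, product 1, S^{p^k} = 1 *)
Definition in_Tpk (p k : nat) (xi : 'I_p -> algC) : Prop :=
  (forall q, `|xi q| = 1) /\ (\prod_(q < p) xi q = 1) /\
  (forall q, xi q ^+ (p ^ k) = 1).

Definition commx (n : nat) (A B : 'M[algC]_n) : 'M[algC]_n :=
  A *m B *m invmx A *m invmx B.

(* b'/b in Z_p (p prime, b nonzero mod p), representative in {0,...,p-1}:
   b' * u mod p, where (egcdn b p).1 = u satisfies b*u = 1 mod p. *)
Definition zpdiv (p b' b : nat) : nat := (b' * (egcdn b p).1) %% p.

From mathcomp Require Import all_boot all_order all_algebra all_field.
Set Implicit Arguments. Unset Strict Implicit. Unset Printing Implicit Defensive.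
Import Order.TTheory GRing.Theory Num.Theory.
Local Open Scope ring_scope.

(* S_xi X^b is the weighted shift with weights xi and shift b.  If b != 0 and
   b' = k b in Z_p, then M^k is a weighted shift with shift b' whose weights
   have product 1, so M' = S_chi M^k with prod chi = 1.  Since M^k commutes
   with M, the commutator relation becomes S_chi M = omega^-c M S_chi, i.e.
   chi (q + b) = omega^-c chi q.  Hence chi q = chi 0 omega^(alpha1 q) with
   b alpha1 = -c, and because p is odd the factors omega^(alpha1 q) have
   product 1, so chi 0 ^ p = prod chi = 1 and chi 0 is a power of omega.
   Exchanging M and M' (and c with -c) gives (3); for b = b' = 0 both
   matrices are diagonal, so they commute and omega^c = 1. *)

Section WeightedShift.
Variables (R : pzRingType) (n : nat).

Definition wshift (f : 'I_n.+1 -> R) (s : 'I_n.+1) : 'M[R]_n.+1 :=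
  \matrix_(i, j) (f i * (i == j + s)%:R).

Lemma eq_wshift f g s : f =1 g -> wshift f s = wshift g s.
Proof. by move=> fg; apply/matrixP => i j; rewrite !mxE fg. Qed.

Lemma wshift_inj f g s : wshift f s = wshift g s -> f =1 g.
Proof. by move=> /matrixP fg i; have := fg i (i - s); rewrite !mxE subrK eqxx !mulr1. Qed.

Lemma wshiftM f g s t :
  wshift f s *m wshift g t = wshift (fun i => f i * g (i - s)) (s + t).
Proof.
apply/matrixP => i j; rewrite !mxE (bigD1 (i - s)) //= big1 ?addr0 => [|k ks].
  rewrite !mxE subrK eqxx mulr1 -mulrA (addrC s) addrA.
  by rewrite (can2_eq (subrK s) (addrK s)).
rewrite !mxE (_ : i == k + s = false) ?mulr0 ?mul0r //.
by rewrite -(subr_eq i) eq_sym (negbTE ks).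
Qed.

Lemma scale_wshift a f s : a *: wshift f s = wshift (fun i => a * f i) s.
Proof. by apply/matrixP => i j; rewrite !mxE mulrA. Qed.

Lemma scalar_wshift a : a%:M = wshift (fun=> a) 0.
Proof. by apply/matrixP => i j; rewrite !mxE addr0 mulr_natr. Qed.

Lemma wshiftX f s k :
  wshift f s ^+ k = wshift (fun i => \prod_(j < k) f (i - s *+ j)) (s *+ k).
Proof.
elim: k => [|k IHk].
  by apply/matrixP => i j; rewrite expr0 !mxE big_ord0 mul1r addr0.
rewrite exprS IHk -mulmxE wshiftM -mulrS; apply: eq_wshift => i.
rewrite big_ord_recl subr0; congr (_ * _); apply: eq_bigr => j _.
by rewrite mulrS opprD addrA.
Qed.

End WeightedShift.

Lemma prod_translates (R : comPzSemiRingType) n (f : 'I_n.+1 -> R) s k :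
  \prod_i \prod_(j < k) f (i - s *+ j) = (\prod_i f i) ^+ k.
Proof.
rewrite exchange_big /= -[k in RHS]card_ord -prodr_const; apply: eq_bigr => j _.
by rewrite (reindex_inj (addIr (s *+ j))); apply: eq_bigr => i _; rewrite addrK.
Qed.

Lemma wshift_unit (F : fieldType) n (f : 'I_n.+1 -> F) s :
  (forall i, f i != 0) -> wshift f s \in unitmx.
Proof.
move=> f0; apply: (proj1 (@mulmx1_unit _ _ _ (wshift (fun i => (f (i + s))^-1) (- s)) _)).
by rewrite wshiftM subrr scalar_wshift; apply: eq_wshift => i; rewrite subrK mulfV.
Qed.

Lemma skew_commute_wshift0 (R : idomainType) n (f g : 'I_n.+1 -> R) a i :
  f i != 0 -> g i != 0 ->
  wshift f 0 *m wshift g 0 = a *: (wshift g 0 *m wshift f 0) -> a = 1.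
Proof.
move=> fi0 gi0; rewrite !wshiftM scale_wshift => /wshift_inj/(_ i).
by rewrite subr0 mulrC -{1}[g i * f i]mul1r => /(mulIf (mulf_neq0 gi0 fi0)).
Qed.

Lemma skew_commute_factor (R : comUnitRingType) n (A S C : 'M[R]_n) a :
  C \in unitmx -> A *m C = C *m A ->
  S *m C *m A = a *: (A *m (S *m C)) -> S *m A = a *: (A *m S).
Proof.
move=> uC cAC; rewrite -mulmxA -cAC !mulmxA scalemxAl.
by move/(congr1 (mulmx^~ (invmx C))); rewrite !mulmxK.
Qed.

Lemma skew_commuteV (R : comUnitRingType) n (A B : 'M[R]_n) a a' :
  a' * a = 1 -> A *m B = a *: (B *m A) -> B *m A = a' *: (A *m B).
Proof. by move=> a'a ->; rewrite scalerA a'a scale1r. Qed.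

Lemma unitZp_prime n (b : 'I_n.+2) :
  prime n.+2 -> (b : nat) != 0%N -> b \is a GRing.unit.
Proof.
move=> pP b0; have := @unitZpE n.+2 b isT; rewrite natr_Zp => ->.
by rewrite prime_coprime // gtnNdvd ?lt0n.
Qed.

Lemma zpdivE n (b b' : 'I_n.+2) :
  b \is a GRing.unit -> zpdiv n.+2 b' b = b' / b :> nat.
Proof.
move=> bU; have cb : coprime n.+2 b := bU.
by rewrite /zpdiv /= -[b^-1]/(Zp_inv b) /Zp_inv cb /= modnMmr.
Qed.

Lemma mulrn_zpdiv n (b b' : 'I_n.+2) :
  b \is a GRing.unit -> b *+ zpdiv n.+2 b' b = b'.
Proof. by move=> bU; rewrite zpdivE // -mulr_natr natr_Zp mulrC divrK. Qed.

Lemma expr_ZpN (R : pzRingType) n (w : R) (c : 'I_n.+1) :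
  w ^+ n.+1 = 1 -> w ^+ (- c) * w ^+ c = 1.
Proof.
by move=> w1; rewrite -exprD -(expr_mod _ w1); have /= -> := congr1 val (addNr c).
Qed.

Lemma prim_expr_ord_eq1 (R : nzRingType) n (w : R) (c : 'I_n) :
  n.-primitive_root w -> w ^+ c = 1 -> c = 0 :> nat.
Proof.
move=> wP /eqP; rewrite -(prim_order_dvd wP) => n_dvd_c; apply/eqP.
by apply: contraTT n_dvd_c; rewrite -lt0n => c_gt0; rewrite gtnNdvd.
Qed.

Lemma prod_expr_ord_odd (R : comPzSemiRingType) (w : R) P a :
  odd P -> w ^+ P = 1 -> \prod_(q < P) w ^+ (a * q) = 1.
Proof.
move=> Podd w1; rewrite prodrXr -big_distrr /= -(big_mkord xpredT (fun q => q)).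
by rewrite bin2_sum bin2odd // mulnCA exprM w1 expr1n.
Qed.

Lemma shift_eigen_mulrn (R : pzRingType) n (chi : 'I_n.+1 -> R) (w : R) b d :
  (forall i, chi (i + b) = w ^+ d * chi i) ->
  forall t, chi (b *+ t) = w ^+ (d * t) * chi 0.
Proof.
move=> chiS; elim=> [|t IHt]; first by rewrite mulr0n muln0 mul1r.
by rewrite mulrSr chiS IHt mulnS exprD mulrA.
Qed.

Section SkewCommutingShifts.
Variables (F : fieldType) (n : nat) (w : F).
Hypotheses (Podd : odd n.+2) (wP : n.+2.-primitive_root w).

Lemma shift_eigen_affine (chi : 'I_n.+2 -> F) b d :
  b \is a GRing.unit -> \prod_q chi q = 1 ->
  (forall i, chi (i + b) = w ^+ d * chi i) ->
  exists a0 a1 : 'I_n.+2, (forall q, chi q = w ^+ (a0 + a1 * q)) /\ b * a1 = d%:R.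
Proof.
move=> bU pchi chiS; have w1 := prim_expr_order wP.
pose a1 : 'I_n.+2 := d%:R / b.
have chiE q : chi q = w ^+ (a1 * q) * chi 0.
  have qE : b *+ (q / b : 'I_n.+2) = q by rewrite -mulr_natr natr_Zp mulrC divrK.
  rewrite -{1}qE (shift_eigen_mulrn chiS); congr (_ * _).
  rewrite -(expr_mod _ w1) -[RHS](expr_mod _ w1); congr (w ^+ _).
  have := congr1 val (mulrA (d%:R : 'I_n.+2) q b^-1).
  by rewrite /a1 mulrAC Zp_nat /= => <-; rewrite modnMml.
have chi0_root : chi 0 ^+ n.+2 = 1.
  move: pchi; rewrite (eq_bigr _ (fun q _ => chiE q)) big_split /=.
  by rewrite prod_expr_ord_odd // prodr_const card_ord mul1r.
have [a0 chi0E] := prim_rootP wP chi0_root.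
exists a0, a1; split; last by rewrite mulrC divrK.
by move=> q; rewrite chiE chi0E -exprD addnC.
Qed.

Lemma skew_commute_wshift_factor (xi xi' : 'I_n.+2 -> F) b b' d :
  b \is a GRing.unit -> (forall i, xi i != 0) ->
  \prod_i xi i = 1 -> \prod_i xi' i = 1 ->
  wshift xi' b' *m wshift xi b = w ^+ d *: (wshift xi b *m wshift xi' b') ->
  exists a0 a1 : 'I_n.+2,
    wshift xi' b' =
      wshift (fun q => w ^+ (a0 + a1 * q)) 0 *m wshift xi b ^+ zpdiv n.+2 b' b
    /\ b * a1 = d%:R.
Proof.
move=> bU xi0 pxi pxi' skew.
set M := wshift xi b; set k := zpdiv n.+2 b' b.
pose eta i := \prod_(j < k) xi (i - b *+ j).
have MkE : M ^+ k = wshift eta b' by rewrite wshiftX mulrn_zpdiv.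
have eta0 i : eta i != 0 by apply/prodf_neq0.
pose chi i := xi' i / eta i.
have M'E : wshift xi' b' = wshift chi 0 *m M ^+ k.
  by rewrite MkE wshiftM add0r; apply: eq_wshift => i; rewrite subr0 divfK.
have chi_skew : wshift chi 0 *m M = w ^+ d *: (M *m wshift chi 0).
  apply: (@skew_commute_factor _ _ _ _ (M ^+ k)); last by rewrite -M'E.
    by rewrite MkE wshift_unit.
  by rewrite mulmxE; apply: commrX.
have chiS i : chi (i + b) = w ^+ d * chi i.
  move: chi_skew; rewrite !wshiftM scale_wshift add0r addr0.
  move=> /wshift_inj/(_ (i + b)); rewrite subr0 addrK mulrCA mulrC.
  exact: mulfI.
have pchi : \prod_i chi i = 1.
  by rewrite prodf_div pxi' prod_translates pxi expr1n divr1.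
have [a0 [a1 [chiE ba1]]] := shift_eigen_affine bU pchi chiS.
by exists a0, a1; split => //; rewrite M'E; congr (_ *m _); apply: eq_wshift.
Qed.

End SkewCommutingShifts.

Lemma Sdiag_wshift n (f : 'I_n.+1 -> algC) : Sdiag f = wshift f 0.
Proof. by apply/matrixP => i j; rewrite !mxE addr0 mulr_natr eq_sym. Qed.

Lemma Xshift_wshift n : Xshift n.+2 = wshift (fun=> 1) 1.
Proof. by apply/matrixP => i j; rewrite !mxE mul1r -val_eqE /= modnDmr addn1. Qed.

Lemma mxpowE n (A : 'M[algC]_n.+1) k : mxpow A k = A ^+ k.
Proof. by elim: k => //= k; rewrite /mxpow /= => ->; rewrite exprS mulmxE. Qed.

Lemma Sdiag_Xshift n (xi : 'I_n.+2 -> algC) (b : 'I_n.+2) :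
  Sdiag xi *m mxpow (Xshift n.+2) b = wshift xi b.
Proof.
rewrite Sdiag_wshift Xshift_wshift mxpowE wshiftX wshiftM add0r.
rewrite -[1 *+ _]/(b%:R) natr_Zp.
by apply: eq_wshift => i; rewrite big1_eq mulr1.
Qed.

Lemma commx_scalar_skew n (A B : 'M[algC]_n) a :
  A \in unitmx -> B \in unitmx -> commx A B = a%:M -> A *m B = a *: (B *m A).
Proof.
move=> uA uB AB_a.
by rewrite -mul_scalar_mx -AB_a /commx mulmxA (mulmxKV uB) (mulmxKV uA).
Qed.

Lemma normC1_Re_leN1 (y : algC) : `|y| = 1 -> 'Re y <= -1 -> y = -1.
Proof.
move=> y1 Rey; have Rey_le0 : 'Re y <= 0 by apply: le_trans Rey (lerN10 _).
have Re_norm : `|'Re y| = `|y|.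
  apply/eqP; rewrite eq_le (leif_normC_Re_Creal y) y1 /=.
  by rewrite ler0_norm // lerNr.
have /Creal_ReP yRe : y \is Num.real by rewrite -(leif_normC_Re_Creal y).2 Re_norm.
have y_le0 : y <= 0 by rewrite -yRe.
by apply/eqP; rewrite -eqr_oppLR -(ler0_norm y_le0) y1.
Qed.

Lemma rootCN1_neqN1 n : (1 < n)%N -> n.-root (-1 : algC) != -1.
Proof.
move=> n_gt1; have n_gt0 := ltnW n_gt1.
have [z zP] : {z : algC | (2 * n).-primitive_root z}.
  by apply: C_prim_root_exists; rewrite muln_gt0.
have zn : z ^+ n = -1.
  have /eqP := prim_expr_order zP; rewrite mulnC exprM sqrf_eq1 => /orP[|/eqP //].
  by rewrite -(prim_order_dvd zP) -{2}[n]mul1n dvdn_pmul2r // gtnNdvd.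
have z2 : z ^+ 2 != 1 by rewrite -(prim_order_dvd zP) gtnNdvd // ltn_Pmulr.
(* n.-root (-1) has maximal real part among the roots of -1 in the closed upper
   half plane, and z or its conjugate is such a root other than -1. *)
suff [y [yn y2 Imy]] : exists y : algC, [/\ y ^+ n = -1, y ^+ 2 != 1 & 0 <= 'Im y].
  apply: contra y2 => /eqP rN1; have := rootC_Re_max n_gt0 yn Imy.
  rewrite rN1 (Creal_ReP _ (rpredN1 _)) => /(normC1_Re_leN1 _) -> //.
    by rewrite sqrrN expr1n.
  by apply/eqP; rewrite -(pexpr_eq1 n_gt0) // -normrX yn normrN1.
have [Imz|Imz] := real_ge0P (Creal_Im z); first by exists z.
exists z^*; split; first by rewrite -rmorphXn zn rmorphN1.
  by rewrite -rmorphXn fmorph_eq1.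
by rewrite Im_conj oppr_ge0 ltW.
Qed.

Lemma omega_prim_root p : prime p -> p.-primitive_root (omega p).
Proof.
move=> pP; have p_gt0 := prime_gt0 pP.
have rootN1 : p.-root (-1 : algC) ^+ p = -1 by rewrite rootCK.
have w1 : omega p ^+ p = 1 by rewrite /omega exprAC rootN1 sqrrN expr1n.
have [k kP /(primeP pP).2/pred2P[k1|kp]] := prim_order_exists p_gt0 w1.
  suff : omega p != 1 by rewrite -{1}(prim_expr_order kP) k1 expr1 eqxx.
  rewrite /omega sqrf_eq1 negb_or rootCN1_neqN1 ?prime_gt1 // andbT.
  apply/eqP => root1; move: rootN1; rewrite root1 expr1n => /eqP.
  by rewrite -subr_eq0 opprK (@pnatr_eq0 _ 2).
by rewrite kp in kP.
Qed.

Theorem corollary2 (p m : nat) (pP : prime p) (p_odd : odd p) (m_ge1 : (1 <= m)%N)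
    (xi xi' : 'I_p -> algC) (b b' c : 'I_p) :
  in_Tpk m xi -> in_Tpk m xi' ->
  let M := Sdiag xi *m mxpow (Xshift p) b in
  let M' := Sdiag xi' *m mxpow (Xshift p) b' in
  commx M M' = (omega p ^+ c)%:M ->
  [/\ ((b : nat) = 0%N -> (b' : nat) = 0%N -> (c : nat) = 0%N),
      ((b : nat) != 0%N ->
        exists alpha0' alpha1' : 'I_p,
          M' = Sdiag (fun q : 'I_p => omega p ^+ (alpha0' + alpha1' * q)%N)
                 *m mxpow M (zpdiv p b' b)
          /\ ((c + b * alpha1') %% p = 0)%N) &
      ((b' : nat) != 0%N ->
        exists alpha0 alpha1 : 'I_p,
          M = Sdiag (fun q : 'I_p => omega p ^+ (alpha0 + alpha1 * q)%N)
                *m mxpow M' (zpdiv p b b')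
          /\ (c : nat) = ((b' * alpha1) %% p)%N)].
Proof.
move: p pP p_odd xi xi' b b' c; case=> [|[|n]] // pP p_odd xi xi' b b' c.
(* Neither m nor the p^m-torsion of S_xi, S_xi' plays any role. *)
move=> [xi1 [pxi _]] [xi'1 [pxi' _]] M M' commMM'.
have wP := omega_prim_root pP.
have xi0 q : xi q != 0 by rewrite -normr_eq0 xi1 oner_eq0.
have xi'0 q : xi' q != 0 by rewrite -normr_eq0 xi'1 oner_eq0.
have eM : M = wshift xi b by rewrite /M Sdiag_Xshift.
have eM' : M' = wshift xi' b' by rewrite /M' Sdiag_Xshift.
have skew :
    wshift xi b *m wshift xi' b' = omega n.+2 ^+ c *: (wshift xi' b' *m wshift xi b).
  rewrite -eM -eM'; apply: commx_scalar_skew => //.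
    by rewrite eM wshift_unit.
  by rewrite eM' wshift_unit.
split.
- move=> b0 b'0; move: skew; have [-> ->] : b = 0 /\ b' = 0 by split; apply: val_inj.
  by move/(skew_commute_wshift0 (xi0 0) (xi'0 0)); apply: prim_expr_ord_eq1.
- move/(unitZp_prime pP) => bU.
  have skew' := skew_commuteV (expr_ZpN c (prim_expr_order wP)) skew.
  have [a0 [a1 [E ba1]]] := skew_commute_wshift_factor p_odd wP bU xi0 pxi pxi' skew'.
  exists a0, a1; split; first by rewrite eM' E eM Sdiag_wshift mxpowE.
  by move/(congr1 (fun x => val (c + x))): ba1; rewrite natr_Zp subrr /= modnDmr.
- move/(unitZp_prime pP) => b'U.
  have [a0 [a1 [E ba1]]] := skew_commute_wshift_factor p_odd wP b'U xi'0 pxi' pxi skew.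
  exists a0, a1; split; first by rewrite eM E eM' Sdiag_wshift mxpowE.
  by move/(congr1 val): ba1; rewrite natr_Zp => <-.
Qed.
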